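(* Let $\psi\in C^\infty(P)$ be strongly convex and for $s\in\mathbb R$ let $g_s=g_P+s\psi$ with Hessian $H_s$ on $\check P$. Then for each vertex $v$ of $P$ and each $s\in\mathbb R$ there is a positive-definite island of $g_s$ containing $v$; that is, there exists a connected open neighbourhood $U^v_s$ of $v$ in $P$ such that $H_s(x)$ is positive definite for all $x\in U^v_s\cap\check P$.
   Context: Let $P=\{x\in\mathbb R^n:\ell_j(x)=\langle\nu_j,x\rangle+\lambda_j\ge0,\ j=1,\dots,r\}$ be a Delzant polytope (with primitive inward normals $\nu_j$) with interior $\check P$, and $g_P=\frac12\sum_{j=1}^r\ell_j\log\ell_j$ on $\check P$. Strongly convex means the Hessian of $\psi$ is positive definite on $P$. Positive-definite islands are the connected open regions of $P$ on which $H_s$ is positive definite. *)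

From HB Require Import structures.
From mathcomp Require Import all_boot all_order all_algebra.
From mathcomp Require Import all_classical all_reals all_analysis.
Set Implicit Arguments. Unset Strict Implicit. Unset Printing Implicit Defensive.
Import Order.TTheory GRing.Theory Num.Theory.
Import numFieldNormedType.Exports.
Local Open Scope classical_set_scope.
Local Open Scope ring_scope.

Section Defs.
Variables (R : realType) (n r : nat).
Implicit Types (nu : 'I_r -> 'rV[int]_n) (lam : 'I_r -> R) (x v : 'rV[R]_n).

Definition ell nu lam (j : 'I_r) x : R :=
  \sum_(k < n) ((nu j 0 k)%:~R * x 0 k) + lam j.

Definition polytope nu lam : set 'rV[R]_n := [set x | forall j, 0 <= ell nu lam j x].
Definition polytope_int nu lam : set 'rV[R]_n := [set x | forall j, 0 < ell nu lam j x].

Definition is_vertex nu lam v : Prop :=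
  polytope nu lam v /\
  forall a b, polytope nu lam a -> polytope nu lam b ->
    v = 2^-1 *: (a + b) -> a = b.

Definition primitive (w : 'rV[int]_n) : Prop :=
  \big[gcdz/0%Z]_(k < n) w 0 k = 1%Z.

(* Delzant polytope: bounded, nonempty interior, primitive normals, each
   inequality defines a facet, and at every vertex exactly n facets meet, their
   normals forming a Z-basis of Z^n. *)
Definition delzant nu lam : Prop :=
  [/\ (exists M : R, forall x, polytope nu lam x -> forall k, `|x 0 k| <= M),
      (exists x, polytope_int nu lam x),
      (forall j, primitive (nu j)),
      (forall j, exists x, ell nu lam j x = 0 /\
                  forall k, k != j -> 0 < ell nu lam k x) &
      (forall v, is_vertex nu lam v ->
         exists f : 'I_n -> 'I_r, injective f /\
           (forall j, ell nu lam j v = 0 <-> exists i, f i = j) /\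
           (let B := \matrix_(i < n, k < n) nu (f i) 0 k in
            \det B = 1 \/ \det B = -1))].

Fixpoint dder (vs : seq 'rV[R]_n) (f : 'rV[R]_n -> R) : 'rV[R]_n -> R :=
  match vs with
  | [::] => f
  | w :: ws => fun x => 'D_w (dder ws f) x
  end.

Definition smooth_on (U : set 'rV[R]_n) (f : 'rV[R]_n -> R) : Prop :=
  forall vs x, U x -> differentiable (dder vs f) x.

Definition ebasis (i : 'I_n) : 'rV[R]_n := delta_mx 0 i.

Definition hessian (f : 'rV[R]_n -> R) x : 'M[R]_n :=
  \matrix_(i < n, j < n) dder [:: ebasis i; ebasis j] f x.

Definition posdef (M : 'M[R]_n) : Prop :=
  M^T = M /\ forall w : 'rV[R]_n, w != 0 -> 0 < (w *m M *m w^T) 0 0.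

Definition gP nu lam (x : 'rV[R]_n) : R :=
  2^-1 * \sum_(j < r) (ell nu lam j x * ln (ell nu lam j x)).

Definition gs nu lam (psi : 'rV[R]_n -> R) (s : R) (x : 'rV[R]_n) : R :=
  gP nu lam x + s * psi x.

End Defs.

From HB Require Import structures.
From mathcomp Require Import all_boot all_order all_algebra.
From mathcomp Require Import all_classical all_reals all_analysis.
From mathcomp Require Import lra ring.
Import Order.TTheory GRing.Theory Num.Theory.
Import numFieldNormedType.Exports.
Local Open Scope classical_set_scope.
Local Open Scope ring_scope.
Set Implicit Arguments. Unset Strict Implicit. Unset Printing Implicit Defensive.

(** At a vertex [v] exactly [n] facets meet and their integral normals form a
    basis, so the coordinates [z_i = <nu_(f i), w>] control [|w|^2].  On the
    interior the Hessian of [g_P] is [1/2 sum_j nu_j nu_j^T / ell_j]; near [v]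
    the [n] active [ell_(f i)] are small, so this quadratic form is at least
    [(2 kappa + 1) sum_i z_i^2] for any prescribed [kappa], while the Hessian
    of [s psi] is bounded near [v] and hence is at most [kappa sum_i z_i^2] in
    absolute value.  The island is then [B(v, e) /\ P], which is convex, hence
    connected. *)

Section SumsOfSquares.
Variable R : realFieldType.

Lemma ler_term_sum m (F : 'I_m -> R) i : (forall k, 0 <= F k) -> F i <= \sum_k F k.
Proof. by move=> F0; rewrite (bigD1 i) //= lerDl sumr_ge0. Qed.

Lemma ler_sum_inj m k (F : 'I_k -> R) (g : 'I_m -> 'I_k) :
  injective g -> (forall j, 0 <= F j) -> \sum_i F (g i) <= \sum_j F j.
Proof.
move=> g_inj F0.
have -> : \sum_i F (g i) = \sum_(j in g @: [set: 'I_m]) F j.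
  rewrite big_imset /=; last by move=> a b _ _; apply: g_inj.
  by apply: eq_bigl => i; rewrite in_setT.
by rewrite [leRHS](bigID [in g @: [set: 'I_m]]) /= lerDl sumr_ge0.
Qed.

Lemma sqr_sum_le m (a : 'I_m -> R) : (\sum_i a i) ^+ 2 <= m%:R * \sum_i a i ^+ 2.
Proof.
have sum_const (c : R) : \sum_(i < m) c = m%:R * c by rewrite sumr_const card_ord mulr_natl.
rewrite expr2 mulr_suml.
apply: (@le_trans _ _ (\sum_i \sum_j 2^-1 * (a i ^+ 2 + a j ^+ 2))).
  apply: ler_sum => i _; rewrite mulr_sumr; apply: ler_sum => j _.
  have := sqr_ge0 (a i - a j); rewrite sqrrB; lra.
under eq_bigr do rewrite -mulr_sumr big_split /= sum_const.
by rewrite -mulr_sumr big_split /= -mulr_sumr sum_const; lra.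
Qed.

Definition sqnorm n (w : 'rV[R]_n) : R := \sum_k w 0 k ^+ 2.

Lemma sqnorm_gt0 n (w : 'rV[R]_n) : w != 0 -> 0 < sqnorm w.
Proof.
have [k wk0 _|w0] := pickP (fun k => w 0 k != 0); last first.
  by case/eqP; apply/matrixP => i k; rewrite ord1 mxE; apply/eqP/negbFE/w0.
rewrite /sqnorm; apply: (@lt_le_trans _ _ (w 0 k ^+ 2)); first by rewrite lt0r sqrf_eq0 wk0 sqr_ge0.
by apply: ler_term_sum => j; exact: sqr_ge0.
Qed.

Lemma sqr_sum_normr_le n (w : 'rV[R]_n) : (\sum_k `|w 0 k|) ^+ 2 <= n%:R * sqnorm w.
Proof.
have -> : sqnorm w = \sum_k `|w 0 k| ^+ 2.
  by apply: eq_bigr => k _; rewrite real_normK ?num_real.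
exact: sqr_sum_le.
Qed.

Lemma qformE n (M : 'M[R]_n) (w : 'rV[R]_n) :
  (w *m M *m w^T) 0 0 = \sum_i \sum_j w 0 i * M i j * w 0 j.
Proof.
by rewrite mxE exchange_big; apply: eq_bigr => i _; rewrite !mxE mulr_suml.
Qed.

Lemma qform_normr_le n (M : 'M[R]_n) (c : R) (w : 'rV[R]_n) : 0 <= c ->
  (forall i j, `|M i j| <= c) -> `|(w *m M *m w^T) 0 0| <= c * n%:R * sqnorm w.
Proof.
move=> c0 Mc; rewrite qformE -mulrA.
apply: le_trans (ler_wpM2l c0 (sqr_sum_normr_le w)).
rewrite expr2 mulr_suml mulr_sumr; apply: le_trans (ler_norm_sum _ _ _) _.
apply: ler_sum => i _; rewrite mulr_sumr mulr_sumr.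
apply: le_trans (ler_norm_sum _ _ _) _; apply: ler_sum => j _.
by rewrite !normrM mulrA [c * _]mulrC ler_wpM2r // ler_wpM2l.
Qed.

Lemma qform_rank1_sum n r (w : 'rV[R]_n) (a : 'I_r -> 'I_n -> R) (l : 'I_r -> R) :
  \sum_i \sum_j w 0 i * (\sum_k a k i * a k j / l k) * w 0 j =
  \sum_k (\sum_i w 0 i * a k i) ^+ 2 / l k.
Proof.
under eq_bigr do under eq_bigr do rewrite mulr_sumr mulr_suml.
under eq_bigr do rewrite exchange_big /=.
rewrite exchange_big /=.
apply: eq_bigr => k _; rewrite expr2 mulr_suml mulr_suml.
apply: eq_bigr => i _; rewrite mulr_sumr mulr_suml.
by apply: eq_bigr => j _; ring.
Qed.

Lemma sqnorm_le_mulmx_unit n (A : 'M[R]_n) : A \in unitmx ->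
  exists2 L, 0 <= L & forall w, sqnorm w <= L * sqnorm (w *m A).
Proof.
move=> A_unit; pose C := invmx A; pose K : R := \sum_k \sum_i `|C k i|.
have K0 : 0 <= K by do 2!apply: sumr_ge0 => ? _.
have CK k i : `|C k i| <= K.
  apply: le_trans (ler_term_sum i (fun _ => normr_ge0 _)) _.
  by apply: (ler_term_sum k) => l; apply: sumr_ge0.
exists (n%:R * (K ^+ 2 * n%:R)); first by rewrite !mulr_ge0 ?sqr_ge0.
move=> w; pose z := w *m A; pose T : R := \sum_i `|z 0 i|.
have wk k : `|w 0 k| <= K * T.
  have -> : w 0 k = (z *m C) 0 k by rewrite /z /C mulmxK.
  rewrite mxE /T mulr_sumr; apply: le_trans (ler_norm_sum _ _ _) _.
  by apply: ler_sum => i _; rewrite normrM mulrC ler_wpM2r ?CK.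
apply: (@le_trans _ _ (\sum_(k < n) K ^+ 2 * (n%:R * sqnorm z))); last first.
  by rewrite sumr_const card_ord -[_ *+ n]mulr_natl -!mulrA.
apply: ler_sum => k _; rewrite -real_normK ?num_real //.
apply: (@le_trans _ _ ((K * T) ^+ 2)).
  have T0 : 0 <= T by apply: sumr_ge0.
  by rewrite ler_sqr ?nnegrE ?mulr_ge0.
by rewrite exprMn ler_wpM2l ?sqr_ge0 // sqr_sum_normr_le.
Qed.

End SumsOfSquares.

Section Barrier.
Variable R : realType.

Lemma barrier_qform_ge n r (a : 'I_r -> 'I_n -> R) (f : 'I_n -> 'I_r) (l : 'I_r -> R)
    (kappa : R) (w : 'rV[R]_n) :
  injective f -> 0 <= kappa -> (forall k, 0 < l k) ->
  (forall i, l (f i) <= (2 * kappa + 1)^-1) ->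
  (2 * kappa + 1) * sqnorm (w *m (\matrix_(i, k) a (f i) k)^T)
    <= \sum_k (\sum_i w 0 i * a k i) ^+ 2 / l k.
Proof.
move=> f_inj kappa0 l_gt0 l_small.
apply: le_trans (ler_sum_inj (F := fun k => (\sum_i w 0 i * a k i) ^+ 2 / l k) f_inj _);
  last by move=> k; rewrite divr_ge0 ?sqr_ge0 ?ltW.
rewrite /sqnorm mulr_sumr; apply: ler_sum => i _.
have -> : (w *m (\matrix_(i, k) a (f i) k)^T) 0 i = \sum_k w 0 k * a (f i) k.
  by rewrite mxE; apply: eq_bigr => k _; rewrite !mxE.
rewrite mulrC ler_wpM2l ?sqr_ge0 // -[2 * kappa + 1]invrK lef_pV2 ?posrE //.
by rewrite invr_gt0 ltr_wpDl ?mulr_ge0.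
Qed.

Lemma posdef_barrier_dominates n r (a : 'I_r -> 'I_n -> R) (f : 'I_n -> 'I_r) (s c : R) :
  0 <= c -> injective f -> \matrix_(i, k) a (f i) k \in unitmx ->
  exists2 d, 0 < d & forall (l : 'I_r -> R) (H : 'M[R]_n),
    (forall k, 0 < l k) -> (forall i, l (f i) <= d) ->
    H^T = H -> (forall i j, `|H i j| <= c) ->
    posdef (\matrix_(i, j) (2^-1 * \sum_k a k i * a k j / l k + s * H i j)).
Proof.
move=> c0 f_inj A_unit; pose A := (\matrix_(i, k) a (f i) k)^T.
have [L L0 HL] : exists2 L, 0 <= L & forall w, sqnorm w <= L * sqnorm (w *m A).
  by apply: sqnorm_le_mulmx_unit; rewrite unitmx_tr.
pose kappa := `|s| * c * n%:R * L.
have kappa0 : 0 <= kappa by rewrite !mulr_ge0.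
exists (2 * kappa + 1)^-1; first by rewrite invr_gt0 ltr_wpDl ?mulr_ge0.
move=> l H l_gt0 l_small H_sym H_bd; split.
  apply/matrixP => i j; rewrite !mxE; congr (_ * _ + _ * _).
    by apply: eq_bigr => k _; rewrite [a k j * _]mulrC.
  by move/matrixP: H_sym => /(_ j i); rewrite mxE.
move=> w w_neq0; pose z := w *m A; pose Q := (w *m H *m w^T) 0 0.
pose S := \sum_k (\sum_i w 0 i * a k i) ^+ 2 / l k.
have -> : (w *m \matrix_(i, j) (2^-1 * \sum_k a k i * a k j / l k + s * H i j) *m w^T) 0 0
    = 2^-1 * S + s * Q.
  rewrite /S /Q !qformE -qform_rank1_sum mulr_sumr mulr_sumr -big_split.
  apply: eq_bigr => i _.
  rewrite mulr_sumr mulr_sumr -big_split; apply: eq_bigr => j _; rewrite mxE /=; ring.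
have S_ge := barrier_qform_ge a w f_inj kappa0 l_gt0 l_small.
have sQ_ge : - (kappa * sqnorm z) <= s * Q.
  apply: lerNnormlW; rewrite normrM /kappa -!mulrA ler_wpM2l //.
  rewrite mulrA; apply: le_trans (qform_normr_le w c0 H_bd) _.
  by rewrite ler_wpM2l ?mulr_ge0 //; exact: HL.
have z_gt0 : 0 < sqnorm z.
  rewrite lt0r sumr_ge0 ?andbT => [|k _]; last exact: sqr_ge0.
  by apply/eqP => z0; move: (HL w); rewrite -/z z0 mulr0 leNgt sqnorm_gt0.
move: S_ge sQ_ge; rewrite -/A -/z -/S mulrDl mul1r -mulrA.
move: (kappa * sqnorm z) (s * Q) => kz sQ; lra.
Qed.

End Barrier.

Section AlongLines.
Variable R : realType.

Lemma derive_line (V : normedModType R) (f : V -> R) x v :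
  'D_v f x = 'D_1 (fun h : R => f (h *: v + x)) 0.
Proof.
rewrite /derive.
have -> : (fun h : R => h^-1 *: ((f \o shift x) (h *: v) - f x)) =
    (fun h : R => h^-1 *: (((fun h0 : R => f (h0 *: v + x)) \o shift 0) (h *: 1)
                           - f (0 *: v + x))).
  by rewrite funeqE => h /=; rewrite addr0 scale0r add0r [_%:A]mulr1.
by [].
Qed.

Lemma is_derive_comp_affine (V : normedModType R) (f : V -> R) (G : R -> R) y w c g' :
  (forall h, f (h *: w + y) = h * c + f y) ->
  is_derive (f y) 1 G g' -> is_derive y w (G \o f) (c * g').
Proof.
move=> f_affine G'.
have dG : differentiable G (f y) by apply/derivable1_diffP; exact: ex_derive.
have line : (fun h : R => (G \o f) (h *: w + y)) = (fun h : R => G (h *: c + f y)).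
  by rewrite funeqE => h /=; rewrite f_affine.
apply: DeriveDef.
  by apply/derivable1P; rewrite line; apply/(derivable1P G (f y) c); exact: diff_derivable.
rewrite derive_line line -derive_line deriveE // diff1E //.
by rewrite derive1E derive_val.
Qed.

Lemma starshaped_connected (V : normedModType R) (U : set V) v : U v ->
  (forall x t, U x -> 0 <= t <= 1 -> U (t *: (x - v) + v)) -> connected U.
Proof.
move=> Uv U_star.
have -> : U = \bigcup_(x in U) [set t *: (x - v) + v | t in `[0, 1]].
  apply/seteqP; split => [y Uy|y [x Ux [t t01 <-]]]; last by apply: U_star.
  by exists y => //; exists 1; rewrite ?scale1r ?subrK //= in_itv /= ler01 lexx.
apply: bigcup_connected.
  by exists v => x Ux; exists 0; rewrite ?scale0r ?add0r //= in_itv /= ler01 lexx.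
move=> x Ux; apply: connected_continuous_connected.
  by apply/connected_intervalP; exact: interval_is_interval.
apply: continuous_subspaceT => t; apply: differentiable_continuous.
exact: differentiableD (differentiableZl _ _) (differentiable_cst _ _).
Qed.

End AlongLines.

Section Polytope.
Variables (R : realType) (n r : nat) (nu : 'I_r -> 'rV[int]_n) (lam : 'I_r -> R).
Local Notation ell := (ell nu lam).
Local Notation polytope := (polytope nu lam).
Local Notation polytope_int := (polytope_int nu lam).

Definition ell_lin (j : 'I_r) (w : 'rV[R]_n) : R := \sum_(k < n) (nu j 0 k)%:~R * w 0 k.

Lemma ell_affine j h (w y : 'rV[R]_n) : ell j (h *: w + y) = h * ell_lin j w + ell j y.
Proof.
rewrite /ell /ell_lin addrA; congr (_ + _).
rewrite mulr_sumr -big_split /=; apply: eq_bigr => k _.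
by rewrite !mxE mulrDr mulrCA.
Qed.

Lemma ell_lin_ebasis j i : ell_lin j (ebasis R i) = (nu j 0 i)%:~R.
Proof.
rewrite /ell_lin (bigD1 i) //= big1 ?addr0 => [|k ki]; first by rewrite mxE !eqxx mulr1.
by rewrite mxE eqxx (negbTE ki) mulr0.
Qed.

Lemma is_derive_ell j (y w : 'rV[R]_n) : is_derive y w (ell j) (ell_lin j w).
Proof.
have := is_derive_comp_affine (fun h => ell_affine j h w y) (is_derive_id (ell j y) 1).
by rewrite mulr1.
Qed.

Lemma is_derive_ln_ell j (y w : 'rV[R]_n) : 0 < ell j y ->
  is_derive y w (fun x => ln (ell j x)) (ell_lin j w / ell j y).
Proof.
by move=> ly; exact: is_derive_comp_affine (fun h => ell_affine j h w y) (is_derive1_ln ly).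
Qed.

Lemma is_derive_xlnx_ell j (y w : 'rV[R]_n) : 0 < ell j y ->
  is_derive y w (fun x => ell j x * ln (ell j x)) (ell_lin j w * (ln (ell j y) + 1)).
Proof.
move=> ly; apply: is_derive_eq (is_deriveM (is_derive_ell j y w) (is_derive_ln_ell w ly)) _.
rewrite /GRing.scale /= mulrCA mulfV ?gt_eqF //.
by rewrite mulrDr mulr1 addrC mulrC.
Qed.

Definition dgP (w y : 'rV[R]_n) : R :=
  2^-1 * \sum_(j < r) ell_lin j w * (ln (ell j y) + 1).

Lemma is_derive_gP (y w : 'rV[R]_n) : polytope_int y -> is_derive y w (gP nu lam) (dgP w y).
Proof.
move=> Py.
have -> : gP nu lam = 2^-1 \*: \sum_(j < r) (fun x => ell j x * ln (ell j x)).
  by rewrite funeqE => x; rewrite /gP /= fct_sumE.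
by apply/is_deriveZ/is_derive_sum => j; exact: is_derive_xlnx_ell.
Qed.

Lemma is_derive_dgP (y w u : 'rV[R]_n) : polytope_int y ->
  is_derive y u (dgP w) (2^-1 * \sum_(j < r) ell_lin j w * (ell_lin j u / ell j y)).
Proof.
move=> Py.
have -> : dgP w = 2^-1 \*: \sum_(j < r) (ell_lin j w \*: ((fun x => ln (ell j x)) + cst 1)).
  by rewrite funeqE => x; rewrite /dgP /= fct_sumE.
have D j := is_deriveZ (ell_lin j w)
  (is_deriveD (is_derive_ln_ell u (Py j)) (is_derive_cst (1 : R) y u)).
apply: is_derive_eq (is_deriveZ (2^-1) (is_derive_sum D)) _.
by rewrite /GRing.scale /=; congr (_ * _); apply: eq_bigr => j _; rewrite addr0.
Qed.

Lemma differentiable_ell j (y : 'rV[R]_n) : differentiable (ell j) y.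
Proof.
have -> : ell j = \sum_(k < n) (cst (nu j 0 k)%:~R * (fun z : 'rV[R]_n => z 0 k)) + cst (lam j).
  by rewrite funeqE => z; rewrite /ell /= fct_sumE.
apply: differentiableD (differentiable_cst _ _).
apply: differentiable_sum => k.
exact: differentiableM (differentiable_cst _ _) (differentiable_coord _ _ _).
Qed.

Lemma near_ell_lt j (y : 'rV[R]_n) d : ell j y < d -> \forall x \near y, ell j x < d.
Proof.
by move=> ly; apply: (cvgr_lt _ (differentiable_continuous (differentiable_ell j y)) _ ly).
Qed.

Lemma near_ell_gt j (y : 'rV[R]_n) d : d < ell j y -> \forall x \near y, d < ell j x.
Proof.
by move=> ly; apply: (cvgr_gt _ (differentiable_continuous (differentiable_ell j y)) _ ly).
Qed.

Lemma near_polytope_int (y : 'rV[R]_n) : polytope_int y -> \forall x \near y, polytope_int x.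
Proof.
move=> Py; suff : \forall x \near y, forall j, 0 < ell j x by [].
by apply: (@filter_forall _ _ (fun j x => 0 < ell j x) (nbhs y) _) => j; exact: near_ell_gt.
Qed.

Lemma hessian_gsE (psi : 'rV[R]_n -> R) s (O : set 'rV[R]_n) x :
  open O -> smooth_on O psi -> O x -> polytope_int x ->
  hessian (gs nu lam psi s) x = \matrix_(i, j)
    (2^-1 * \sum_k (nu k 0 i)%:~R * (nu k 0 j)%:~R / ell k x + s * hessian psi x i j).
Proof.
move=> oO psi_smooth Ox Px; apply/matrixP => i j; rewrite !mxE /=.
have near_O : \forall y \near x, O y by apply: open_nbhs_nbhs.
have near_P := near_polytope_int Px.
rewrite (@near_eq_derive _ _ _ _ (dgP (ebasis R j) \+ s \*: 'D_(ebasis R j) psi)).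
  have dpsi : derivable ('D_(ebasis R j) psi) x (ebasis R i).
    exact/diff_derivable/(psi_smooth [:: ebasis R j]).
  have D := is_deriveD (is_derive_dgP (ebasis R j) (ebasis R i) Px)
                       (is_deriveZ s (derivableP dpsi)).
  rewrite derive_val; congr (_ * _ + _); apply: eq_bigr => k _.
  by rewrite !ell_lin_ebasis mulrA [_ * (nu k 0 i)%:~R]mulrC.
near=> y.
have dpsi : derivable psi y (ebasis R j).
  by apply/diff_derivable/(psi_smooth [::]); near: y.
have Py : polytope_int y by near: y.
have D := is_deriveD (is_derive_gP (ebasis R j) Py) (is_deriveZ s (derivableP dpsi)).
by rewrite /gs derive_val.
Unshelve. all: by end_near.
Qed.

Lemma polytope_segment (x y : 'rV[R]_n) t : polytope x -> polytope y -> 0 <= t <= 1 ->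
  polytope (t *: (x - y) + y).
Proof.
move=> Px Py /andP[t0 t1] j; rewrite ell_affine.
have -> : ell_lin j (x - y) = ell j x - ell j y.
  by have := ell_affine j 1 (x - y) y; rewrite scale1r mul1r subrK => ->; rewrite addrK.
by have := Px j; have := Py j; nra.
Qed.

Lemma connected_ball_polytope (v : 'rV[R]_n) e : polytope v -> 0 < e ->
  connected (ball v e `&` polytope).
Proof.
move=> Pv e0; apply: (@starshaped_connected _ _ _ v); first by split => //; exact: ballxx.
move=> x t [vx Px] t01; split; last exact: polytope_segment.
move: vx; rewrite -ball_normE /ball_ /= => vx.
have -> : v - (t *: (x - v) + v) = t *: (v - x).
  by rewrite opprD addrCA subrr addr0 -scalerN opprB.
case/andP: t01 => t0 t1.
by rewrite normrZ ger0_norm //; apply: le_lt_trans vx; rewrite ler_piMl.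
Qed.

End Polytope.

Lemma near_hessian_bounded (R : realType) n (psi : 'rV[R]_n -> R) (O : set 'rV[R]_n) v :
  smooth_on O psi -> O v ->
  exists2 c, 0 <= c & \forall y \near v, forall i j, `|hessian psi y i j| <= c.
Proof.
move=> psi_smooth Ov; pose b i j := `|hessian psi v i j| + 1.
have b_ge0 i j : 0 <= b i j by rewrite addr_ge0.
exists (\sum_i \sum_j b i j); first by do 2!apply: sumr_ge0 => ? _.
have : \forall y \near v, forall p : 'I_n * 'I_n, `|hessian psi y p.1 p.2| < b p.1 p.2.
  apply: (@filter_forall _ _ (fun p y => `|hessian psi y p.1 p.2| < b p.1 p.2) (nbhs v) _).
  move=> [i j] /=.
  have hv : `|dder [:: ebasis R i; ebasis R j] psi v| < b i j by rewrite /b mxE ltrDl.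
  have near_lt := cvgr_norm_lt _ (differentiable_continuous (psi_smooth _ v Ov)) _ hv.
  by apply: filterS (near_lt _) => y; rewrite mxE.
apply: filterS => y near_b i j; apply: le_trans (ltW (near_b (i, j))) _.
apply: le_trans (ler_term_sum j (b_ge0 i)) _.
by apply: (ler_term_sum i) => k; apply: sumr_ge0.
Qed.

Lemma unitmx_intmx (R : comUnitRingType) n (B : 'M[int]_n) :
  \det B = 1 \/ \det B = -1 -> map_mx (intr : int -> R) B \in unitmx.
Proof.
move=> det_pm1; rewrite unitmxE det_map_mx.
by case: det_pm1 => ->; rewrite ?rmorphN rmorph1 ?unitrN unitr1.
Qed.

Theorem mainTheorem9 (R : realType) (n r : nat)
    (nu : 'I_r -> 'rV[int]_n) (lam : 'I_r -> R) (psi : 'rV[R]_n -> R) :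
  delzant nu lam ->
  (* psi in C^infty(P): smooth on an open neighbourhood of P *)
  (exists O : set 'rV[R]_n, open O /\ polytope nu lam `<=` O /\ smooth_on O psi) ->
  (* strongly convex: Hessian of psi positive definite on P *)
  (forall x, polytope nu lam x -> posdef (hessian psi x)) ->
  forall (v : 'rV[R]_n) (s : R), is_vertex nu lam v ->
    exists U : set 'rV[R]_n,
      [/\ (exists O : set 'rV[R]_n, open O /\ U = O `&` polytope nu lam),
          U `<=` polytope nu lam,
          connected U,
          U v &
          forall x, U x -> polytope_int nu lam x -> posdef (hessian (gs nu lam psi s) x)].
Proof.
move=> [_ _ _ _ vertex_simple] [N [N_open [PN psi_smooth]]] psi_convex v s v_vertex.
have Pv : polytope nu lam v by case: v_vertex.
have [f [f_inj [f_active det_unit]]] := vertex_simple v v_vertex.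
have B_unit : (\matrix_(i, k) (nu (f i) 0 k)%:~R : 'M[R]_n) \in unitmx.
  have -> : \matrix_(i, k) (nu (f i) 0 k)%:~R
            = map_mx intr (\matrix_(i, k) nu (f i) 0 k) :> 'M[R]_n.
    by apply/matrixP => i k; rewrite !mxE.
  exact: unitmx_intmx.
have [c c0 near_c] := near_hessian_bounded psi_smooth (PN v Pv).
have [d d0 dominates] :=
  @posdef_barrier_dominates R n r (fun k i => (nu k 0 i)%:~R) f s c c0 f_inj B_unit.
have near_d : \forall y \near v, forall i, ell nu lam (f i) y < d.
  apply: (@filter_forall _ _ (fun i y => ell nu lam (f i) y < d) (nbhs v) _) => i.
  by apply: near_ell_lt; rewrite (proj2 (f_active (f i))) //; exists i.
have /nbhs_ballP[e e0 ball_e] : \forall y \near v,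
    (forall i j, `|hessian psi y i j| <= c) /\ (forall i, ell nu lam (f i) y < d).
  by near=> y; split; near: y.
exists (ball v e `&` polytope nu lam); split.
- by exists (ball v e); split => //; exact: ball_open.
- by move=> y [].
- exact: connected_ball_polytope.
- by split => //; exact: ballxx.
move=> x [vx Px] Pix; have [x_c x_d] := ball_e x vx.
rewrite (hessian_gsE s N_open psi_smooth (PN x Px) Pix).
by apply: dominates => // [i|]; [exact/ltW/x_d | case: (psi_convex x Px)].
Unshelve. all: by end_near.
Qed.
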